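(* For $c>0$ (and any $s>0$, $F>1$), at every time $t$ with $Z^t>0$, conditional on $(x^t,\lambda^t)$, $$\mathbb E[Z^t-Z^{t+1}\mid \bar A]\ge -\frac{c}{1-e^{-c}}.$$ The same bound holds with $Z^t-Z^{t+1}$ replaced by $\min\{1,Z^t-Z^{t+1}\}$.
   Context: Consider the SA-$(1,\lambda)$-EA on a dynamic monotone function: a function $f:\{0,1\}^n\to\mathbb R$ is monotone if $f(x)>f(y)$ whenever $x\ne y$ and $x_i\ge y_i$ for all $i$; $(f^t)_{t\ge0}$ is a sequence of monotone functions, $f^t$ possibly chosen adversarially depending on $x^t$. The algorithm (with constants $c>0$, $s>0$, $F>1$) maintains $x^t\in\{0,1\}^n$, real $\lambda^t\ge1$; in generation $t$ it creates $\lfloor\lambda^t\rceil$ (nearest integer) offspring $y^{t,j}$, each independently by flipping every bit of $x^t$ independently with probability $c/n$; $x^{t+1}$ is an offspring maximizing $f^t$ (ties uniformly at random); $\lambda^{t+1}=\max\{1,\lambda^t/F\}$ if $f^t(x^{t+1})>f^t(x^t)$, else $\lambda^{t+1}=F^{1/s}\lambda^t$. $Z^t$ is the number of zero-bits of $x^t$. $A$ is the event that some offspring $y^{t,j}$ flips no one-bit of $x^t$; $\bar A$ is its complement (every offspring flips at least one one-bit of $x^t$). *)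

From HB Require Import structures.
From mathcomp Require Import all_boot all_order all_algebra.
From mathcomp Require Import all_classical all_reals all_analysis.
Set Implicit Arguments. Unset Strict Implicit. Unset Printing Implicit Defensive.
Import Order.TTheory GRing.Theory Num.Theory.
Local Open Scope ring_scope.

Definition bits (n : nat) := {ffun 'I_n -> bool}.

Definition zeros (n : nat) (x : bits n) : nat := #|[set i | ~~ x i]|.

Definition monotone_fun (R : realType) (n : nat) (f : bits n -> R) : Prop :=
  forall x y : bits n, x <> y -> (forall i, y i ==> x i) -> f y < f x.

(* number of offspring: nearest integer of lambda (round half up) *)
Definition round_nat (R : realType) (lam : R) : nat :=
  `|Num.floor (lam + 2^-1)|%N.

(* an offspring is described by its flip mask m; offspring = x xor m *)
Definition mutate (n : nat) (x m : bits n) : bits n := [ffun i => x i (+) m i].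

Definition mask_prob (R : realType) (n : nat) (p : R) (m : bits n) : R :=
  \prod_(i < n) (if m i then p else 1 - p).

Definition family_prob (R : realType) (n k : nat) (p : R)
  (ms : {ffun 'I_k -> bits n}) : R := \prod_(j < k) mask_prob p (ms j).

Definition flips_a_one (n : nat) (x m : bits n) : bool := [exists i, x i && m i].
Definition Abar (n k : nat) (x : bits n) (ms : {ffun 'I_k -> bits n}) : bool :=
  [forall j, flips_a_one x (ms j)].

(* selection: offspring maximizing f, ties broken uniformly at random *)
Definition is_best (R : realType) (n k : nat) (f : bits n -> R) (x : bits n)
  (ms : {ffun 'I_k -> bits n}) (j : 'I_k) : bool :=
  [forall j', f (mutate x (ms j')) <= f (mutate x (ms j))].

Definition sel_prob (R : realType) (n k : nat) (f : bits n -> R) (x : bits n)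
  (ms : {ffun 'I_k -> bits n}) (j : 'I_k) : R :=
  if is_best f x ms j then (#|[set j' | is_best f x ms j']|%:R)^-1 else 0.

Definition prob_Abar (R : realType) (n k : nat) (p : R) (x : bits n) : R :=
  \sum_(ms : {ffun 'I_k -> bits n} | Abar x ms) family_prob p ms.

(* E[ g(x^t, x^{t+1}) | Abar ] for one generation from x with k offspring,
   mutation rate p and fitness f *)
Definition cond_exp_Abar (R : realType) (n k : nat) (p : R) (f : bits n -> R)
  (x : bits n) (g : bits n -> R) : R :=
  (\sum_(ms : {ffun 'I_k -> bits n} | Abar x ms)
      family_prob p ms * \sum_(j < k) sel_prob f x ms j * g (mutate x (ms j)))
  / prob_Abar k p x.

From HB Require Import structures.
From mathcomp Require Import all_boot all_order all_algebra.
From mathcomp Require Import all_classical all_reals all_analysis.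
From mathcomp Require Import ring lra.
Import Order.TTheory GRing.Theory Num.Theory.
Set Implicit Arguments. Unset Strict Implicit. Unset Printing Implicit Defensive.
Local Open Scope ring_scope.

(* An offspring x xor m satisfies Z(x) - Z(x xor m) >= -K(m), where K(m) is the
   number of one-bits of x flipped by m, so it suffices to bound the conditional
   mean of K for the selected offspring.  Resample offspring j with
   the others frozen: its selection probability, as a function g of its mask,
   is nonnegative and, f being monotone, does not increase when one more
   one-bit is flipped.  Hence the layers of g have a likelihood ratio dominated
   by that of the binomial law of K (r = #ones, p = c/n), and Chebyshev's sum
   inequality gives E[K g; K > 0] P(K > 0) <= E[K] E[g; K > 0].  Finally
   E[K | K > 0] = r p / (1 - (1 - p)^r) <= n p / (1 - (1 - p)^n) <= c / (1 - e^-c). *)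

Definition ones n (x : bits n) : nat := #|[set i | x i]|.
Definition flipped_ones n (x m : bits n) : nat := #|[set i | x i && m i]|.
Definition toggle n (m : bits n) (i : 'I_n) : bits n :=
  [ffun l => if l == i then ~~ m l else m l].

Section FlippedOnes.
Variables (n : nat) (x : bits n).
Implicit Types (m : bits n) (i : 'I_n).

Lemma flips_a_oneE m : flips_a_one x m = (0 < flipped_ones x m)%N.
Proof.
rewrite /flips_a_one /flipped_ones card_gt0.
by apply/existsP/set0Pn => -[i Hi]; exists i; rewrite ?inE in Hi *.
Qed.

Lemma flipped_ones_le_ones m : (flipped_ones x m <= ones x)%N.
Proof. by apply: subset_leq_card; apply/fintype.subsetP => i; rewrite !inE => /andP[]. Qed.

Lemma ones_le : (ones x <= n)%N.
Proof. by rewrite /ones (leq_trans (max_card _)) // card_ord. Qed.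

Lemma flipped_ones_le m : (flipped_ones x m <= n)%N.
Proof. exact: leq_trans (flipped_ones_le_ones m) ones_le. Qed.

Lemma card_unflipped_ones m :
  #|[pred i | x i && ~~ m i]| = (ones x - flipped_ones x m)%N.
Proof.
rewrite /ones /flipped_ones -(cardsID [set i | m i] [set i | x i]).
have -> : [set i | x i] :&: [set i | m i] = [set i | x i && m i].
  by apply/setP => i; rewrite !inE.
by rewrite addKn; apply: eq_card => i; rewrite !inE andbC.
Qed.

Lemma zeros_mutate_le m : (zeros (mutate x m) <= zeros x + flipped_ones x m)%N.
Proof.
rewrite /zeros /flipped_ones; apply: leq_trans (leq_card_setU _ _).
apply: subset_leq_card; apply/fintype.subsetP => i; rewrite !inE ffunE.
by case: (x i); case: (m i).
Qed.

Lemma toggleK i : involutive (fun m => toggle m i).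
Proof. by move=> m; apply/ffunP => l; rewrite !ffunE; case: eqP => // _; rewrite negbK. Qed.

Lemma toggle_at m i : toggle m i i = ~~ m i.
Proof. by rewrite ffunE eqxx. Qed.

Lemma toggle_ne m i l : l != i -> toggle m i l = m l.
Proof. by rewrite ffunE => /negbTE ->. Qed.

Lemma flipped_ones_toggle m i :
  x i -> ~~ m i -> flipped_ones x (toggle m i) = (flipped_ones x m).+1.
Proof.
move=> xi mi; rewrite /flipped_ones.
have -> : [set l | x l && toggle m i l] = i |: [set l | x l && m l].
  by apply/setP => l; rewrite !inE ffunE; case: eqP => [->|] //=; rewrite xi mi.
by rewrite cardsU1 inE (negbTE mi) andbF.
Qed.

Lemma monotone_mutate_toggle (R : realType) (f : bits n -> R) m i :
  monotone_fun f -> x i -> ~~ m i -> f (mutate x (toggle m i)) < f (mutate x m).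
Proof.
move=> f_mono xi mi; apply: f_mono.
  by move/ffunP/(_ i); rewrite !ffunE eqxx xi; case: (m i) mi.
move=> l; rewrite !ffunE; case: eqP => [->|_]; last by rewrite implybb.
by rewrite xi; case: (m i) mi.
Qed.

End FlippedOnes.

Lemma sum_prod_bits (R : comPzSemiRingType) n (F : 'I_n -> bool -> R) :
  \sum_(m : bits n) \prod_i F i (m i) = \prod_i (F i true + F i false).
Proof.
rewrite -bigA_distr_bigA /=.
by apply: eq_bigr => i _; rewrite big_bool.
Qed.

Section MaskProb.
Variables (R : realType) (n : nat) (p : R).
Implicit Types (x m : bits n) (i : 'I_n).

Lemma mask_prob_ge0 m : 0 <= p -> p <= 1 -> 0 <= mask_prob p m.
Proof. by move=> p0 p1; apply: prodr_ge0 => i _; case: (m i); rewrite ?subr_ge0. Qed.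

Lemma sum_mask_prob : \sum_(m : bits n) mask_prob p m = 1.
Proof.
rewrite (sum_prod_bits (fun i b => if b then p else 1 - p)).
by rewrite big1 // => i _ /=; rewrite addrC subrK.
Qed.

Lemma sum_mask_prob_bit i : \sum_(m : bits n) mask_prob p m * (m i)%:R = p.
Proof.
pose F l (b : bool) := (if l == i then b%:R else 1) * (if b then p else 1 - p).
transitivity (\sum_(m : bits n) \prod_l F l (m l)).
  apply: eq_bigr => m _; rewrite big_split /= mulrC; congr (_ * _).
  by rewrite (bigD1 i) //= eqxx big1 ?mulr1 // => l /negbTE ->.
rewrite sum_prod_bits (bigD1 i) //= /F eqxx mul1r mul0r addr0 big1 ?mulr1 //.
by move=> l /negbTE ->; rewrite !mul1r addrC subrK.
Qed.

Lemma sum_mask_prob_flipped_ones x :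
  \sum_(m : bits n) mask_prob p m * (flipped_ones x m)%:R = (ones x)%:R * p.
Proof.
transitivity (\sum_(m : bits n) \sum_(i | x i) mask_prob p m * (m i)%:R).
  apply: eq_bigr => m _; rewrite -mulr_sumr; congr (_ * _).
  rewrite /flipped_ones -sum1_card natr_sum big_mkcond [RHS]big_mkcond /=.
  apply: eq_bigr => i _.
  by rewrite inE; case: (x i); case: (m i).
rewrite exchange_big /= (eq_bigr (fun _ => p)) => [|i _]; last exact: sum_mask_prob_bit.
by rewrite sumr_const mulr_natl /ones cardsE.
Qed.

Lemma sum_mask_prob_flipped_ones0 x :
  \sum_(m | flipped_ones x m == 0%N) mask_prob p m = (1 - p) ^+ ones x.
Proof.
pose F l (b : bool) := (if x l then (~~ b)%:R else 1) * (if b then p else 1 - p).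
transitivity (\sum_(m : bits n) \prod_l F l (m l)).
  rewrite big_mkcond; apply: eq_bigr => m _; rewrite big_split /=.
  have -> : \prod_l (if x l then (~~ m l)%:R else 1) = (flipped_ones x m == 0%N)%:R :> R.
    rewrite /flipped_ones cards_eq0; case: eqP => [/setP E0 | /eqP/set0Pn[l]].
      by rewrite big1 // => l _; have := E0 l; rewrite !inE; case: (x l) => //= ->.
    by rewrite inE => /andP[xl ml]; rewrite (bigD1 l) //= xl ml mul0r.
  by case: eqP; rewrite ?mul1r ?mul0r.
rewrite sum_prod_bits /ones -prodr_const [RHS]big_mkcond /=; apply: eq_bigr => l _.
by rewrite inE /F; case: (x l); rewrite /= ?mul0r ?mul1r ?add0r // addrC subrK.
Qed.

Lemma mask_prob_toggle m i :
  ~~ m i -> mask_prob p (toggle m i) * (1 - p) = p * mask_prob p m.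
Proof.
move=> mi; rewrite /mask_prob (bigD1 i) //= [in RHS](bigD1 i) //= toggle_at mi (negbTE mi).
rewrite mulrC mulrA [_ * p]mulrC -mulrA; congr (_ * (_ * _)).
by apply: eq_bigr => l li; rewrite toggle_ne.
Qed.

End MaskProb.

Section RatioDominance.
Variables (R : realFieldType) (a d w b : nat -> R).
Hypotheses (a_gt0 : forall k, 0 < a k) (d_ge0 : forall k, 0 <= d k).
Hypothesis b_ge0 : forall k, 0 <= b k.
Hypothesis w_step : forall k, a k * w k.+1 <= d k * w k.
Hypothesis b_step : forall k, a k * b k.+1 = d k * b k.

Lemma ratio_cross_le l e : w (l + e)%N * b l <= w l * b (l + e)%N.
Proof.
elim: e => [|e IH]; first by rewrite addn0.
rewrite addnS -(ler_pM2l (a_gt0 (l + e))) mulrA.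
apply: (le_trans (y := d (l + e) * w (l + e)%N * b l)); first by rewrite ler_wpM2r.
rewrite -mulrA (le_trans (ler_wpM2l (d_ge0 _) IH)) //.
by rewrite mulrCA -b_step mulrCA.
Qed.

(* Symmetrising the double sum, each pair (k, l) contributes
   (l - k) (w k b l - w l b k), which is nonnegative by [ratio_cross_le]. *)
Lemma ratio_mean_le m N :
  (\sum_(m <= k < N) k%:R * w k) * (\sum_(m <= l < N) b l) <=
  (\sum_(m <= k < N) w k) * (\sum_(m <= l < N) l%:R * b l).
Proof.
rewrite -subr_ge0 !mulr_suml.
set S := (X in 0 <= X).
have -> : S = \sum_(m <= k < N) \sum_(m <= l < N) (l%:R - k%:R) * (w k * b l).
  rewrite /S -sumrB; apply: eq_bigr => k _.
  by rewrite !mulr_sumr -sumrB; apply: eq_bigr => l _; ring.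
rewrite -(@ler_pM2l _ 2%:R) // mulr0 mulr_natl mulr2n.
rewrite [X in _ <= _ + X]exchange_big -big_split /=.
apply: sumr_ge0 => k _; rewrite -big_split /=; apply: sumr_ge0 => l _.
have -> : (l%:R - k%:R) * (w k * b l) + (k%:R - l%:R) * (w l * b k)
  = (l%:R - k%:R) * (w k * b l - w l * b k) :> R by ring.
case: (leqP k l) => kl.
  apply: mulr_ge0; first by rewrite subr_ge0 ler_nat.
  by rewrite subr_ge0 -(subnKC kl); apply: ratio_cross_le.
apply: mulr_le0; first by rewrite subr_le0 ler_nat ltnW.
by rewrite subr_le0 -(subnKC (ltnW kl)); apply: ratio_cross_le.
Qed.

End RatioDominance.

Section Layers.
Variables (R : realType) (n : nat) (p : R) (x : bits n).
Implicit Types (m : bits n) (g : bits n -> R).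

Definition layer g k := \sum_(m | flipped_ones x m == k) mask_prob p m * g m.

Lemma sum_by_layers (F : bits n -> R) (P : pred nat) :
  \sum_(m | P (flipped_ones x m)) F m =
  \sum_(0 <= k < n.+1 | P k) \sum_(m | flipped_ones x m == k) F m.
Proof.
rewrite (partition_big (fun m => inord (flipped_ones x m) : 'I_n.+1) P) /=; last first.
  by move=> m; rewrite inordK // ltnS flipped_ones_le.
rewrite big_mkord; apply: eq_bigr => k Pk; apply: eq_bigl => m.
rewrite -val_eqE /= inordK ?ltnS ?flipped_ones_le //.
by case: eqP => [->|]; rewrite ?Pk ?andbF.
Qed.

Lemma sum_by_positive_layers (F : bits n -> R) :
  \sum_(m | (0 < flipped_ones x m)%N) F m =
  \sum_(1 <= k < n.+1) \sum_(m | flipped_ones x m == k) F m.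
Proof.
rewrite (sum_by_layers F (fun k => 0 < k)%N) big_ltn_cond //=.
by rewrite big_nat_cond [RHS]big_nat_cond; apply: eq_bigl => -[|k]; rewrite ?andbT.
Qed.

Lemma layer_mul_flipped_ones g k :
  \sum_(m | flipped_ones x m == k) mask_prob p m * g m * (flipped_ones x m)%:R =
  k%:R * layer g k.
Proof. by rewrite /layer mulr_sumr; apply: eq_bigr => m /eqP ->; rewrite mulrC. Qed.

(* Double counting of the pairs (m, i) with i a one-bit flipped by m, through
   the bijection m |-> toggle m i between layers k.+1 and k. *)
Lemma layer_succ g k :
  (1 - p) * k.+1%:R * layer g k.+1 =
  p * \sum_(m | flipped_ones x m == k)
        mask_prob p m * \sum_(i | x i && ~~ m i) g (toggle m i).
Proof.
pose G m i := if (flipped_ones x m == k.+1) && (x i && m i)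
  then (1 - p) * mask_prob p m * g m else 0.
pose H m i := if (flipped_ones x m == k) && (x i && ~~ m i)
  then p * mask_prob p m * g (toggle m i) else 0.
transitivity (\sum_m \sum_i G m i).
  rewrite /layer /G mulr_sumr big_mkcond; apply: eq_bigr => m _.
  case: eqP => [fm|_] /=; last by rewrite big1.
  rewrite -big_mkcond /= sumr_const.
  have -> : #|[pred i | x i && m i]| = flipped_ones x m.
    by apply: eq_card => i; rewrite inE.
  by rewrite fm -mulr_natr mul1r; ring.
transitivity (\sum_m \sum_i H m i); last first.
  rewrite /H mulr_sumr [RHS]big_mkcond; apply: eq_bigr => m _.
  case: eqP => [_|_] /=; last by rewrite big1.
  rewrite mulrA mulr_sumr [RHS]big_mkcond; apply: eq_bigr => i _.
  by case: ifP; rewrite ?mulr0.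
rewrite exchange_big [RHS]exchange_big; apply: eq_bigr => i _.
rewrite (reindex_inj (inv_inj (toggleK i))); apply: eq_bigr => m _.
rewrite /G /H toggle_at.
case: (boolP (x i)) => xi; case: (boolP (m i)) => mi; rewrite ?andbF ?andbT //=.
rewrite flipped_ones_toggle // eqSS; case: ifP => // _.
by rewrite -(mask_prob_toggle p mi); ring.
Qed.

Hypotheses (p_ge0 : 0 <= p) (p_lt1 : p < 1).

Let mask_prob_nneg m : 0 <= mask_prob p m := mask_prob_ge0 m p_ge0 (ltW p_lt1).

Lemma layer_succ_le g k :
  (forall m i, x i -> ~~ m i -> g (toggle m i) <= g m) ->
  (1 - p) * k.+1%:R * layer g k.+1 <= p * (ones x - k)%:R * layer g k.
Proof.
move=> g_mono; rewrite layer_succ -mulrA ler_wpM2l // /layer mulr_sumr.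
apply: ler_sum => m /eqP fm; rewrite mulrCA ler_wpM2l ?mask_prob_nneg //.
apply: le_trans (_ : \sum_(i | x i && ~~ m i) g m <= _).
  by apply: ler_sum => i /andP[xi mi]; apply: g_mono.
by rewrite sumr_const card_unflipped_ones fm mulr_natl.
Qed.

Lemma layer1_succ k :
  (1 - p) * k.+1%:R * layer (fun=> 1) k.+1 =
  p * (ones x - k)%:R * layer (fun=> 1) k.
Proof.
rewrite layer_succ -[RHS]mulrA /layer; congr (_ * _).
rewrite mulr_sumr; apply: eq_bigr => m /eqP fm.
by rewrite sumr_const card_unflipped_ones fm !mulr1 mulrC.
Qed.

Lemma flipped_ones_weighted_mean_le g :
  (forall m i, x i -> ~~ m i -> g (toggle m i) <= g m) ->
  (\sum_(m | (0 < flipped_ones x m)%N) mask_prob p m * g m * (flipped_ones x m)%:R)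
    * (1 - (1 - p) ^+ ones x)
  <= (ones x)%:R * p * \sum_(m | (0 < flipped_ones x m)%N) mask_prob p m * g m.
Proof.
move=> g_mono; set b := layer (fun=> 1).
have b_ge0 k : 0 <= b k by apply: sumr_ge0 => m _; rewrite mulr1.
have a_gt0 k : 0 < (1 - p) * k.+1%:R by rewrite mulr_gt0 ?subr_gt0.
have d_ge0 k : 0 <= p * (ones x - k)%:R by rewrite mulr_ge0.
have := ratio_mean_le a_gt0 d_ge0 b_ge0 (fun k => layer_succ_le k g_mono)
  layer1_succ 1 n.+1.
have nonzero_layers (F : bits n -> R) :
    \sum_(m | flipped_ones x m != 0%N) F m =
    \sum_(1 <= k < n.+1) \sum_(m | flipped_ones x m == k) F m.
  by rewrite -sum_by_positive_layers; apply: eq_bigl => m; rewrite lt0n.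
have -> : \sum_(1 <= k < n.+1) b k = 1 - (1 - p) ^+ ones x.
  rewrite -(sum_mask_prob_flipped_ones0 p x) -[X in X - _](sum_mask_prob n p).
  rewrite (bigID (fun m => flipped_ones x m == 0%N)) /= addrC addrK nonzero_layers.
  by apply: eq_bigr => k _; apply: eq_bigr => m _; rewrite mulr1.
have -> : \sum_(1 <= k < n.+1) k%:R * b k = (ones x)%:R * p.
  rewrite -sum_mask_prob_flipped_ones (bigID (fun m => flipped_ones x m == 0%N)) /=.
  rewrite [X in _ = X + _]big1 ?add0r => [|m /eqP ->]; last by rewrite mulr0.
  rewrite nonzero_layers; apply: eq_bigr => k _.
  by rewrite /b -layer_mul_flipped_ones; apply: eq_bigr => m _; rewrite mulr1.
rewrite !sum_by_positive_layers (eq_bigr _ (fun k _ => layer_mul_flipped_ones g k)).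
by rewrite [_ * p * _]mulrC.
Qed.
End Layers.

Lemma one_subX_mul_le (R : realFieldType) (s : R) (r N : nat) :
  0 <= s <= 1 -> (r <= N)%N -> r%:R * (1 - s ^+ N) <= N%:R * (1 - s ^+ r).
Proof.
case/andP=> s0 s1 /subnKC <-; elim: (N - r)%N => [|d IH]; first by rewrite addn0.
have step : r%:R * s ^+ (r + d) * (1 - s) <= 1 - s ^+ r.
  have -> : 1 - s ^+ r = (1 - s) * \sum_(i < r) s ^+ i.
    by rewrite -opprB subrX1 -mulNr opprB.
  rewrite mulrC ler_wpM2l ?subr_ge0 //.
  have -> : r%:R * s ^+ (r + d) = \sum_(i < r) s ^+ (r + d).
    by rewrite sumr_const card_ord mulr_natl.
  apply: ler_sum => i _.
  by rewrite ler_wiXn2l // (leq_trans (ltnW (ltn_ord i))) ?leq_addr.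
rewrite addnS exprS -addn1 natrD.
have -> : r%:R * (1 - s * s ^+ (r + d)) =
  r%:R * (1 - s ^+ (r + d)) + r%:R * s ^+ (r + d) * (1 - s) by ring.
lra.
Qed.

Lemma one_sub_expRN_gt0 (R : realType) (c : R) : 0 < c -> 0 < 1 - expR (- c).
Proof. by move=> c0; rewrite subr_gt0 expR_lt1 oppr_lt0. Qed.

Lemma le_div_one_sub_expRN (R : realType) (c : R) : 0 < c -> c <= c / (1 - expR (- c)).
Proof.
move=> c_gt0; have D := one_sub_expRN_gt0 c_gt0.
by rewrite ler_pdivlMr // ler_piMr ?ltW //; have := expR_gt0 (- c); lra.
Qed.

Section DriftBound.
Variables (R : realType) (n : nat) (p c : R).
Hypotheses (p_ge0 : 0 <= p) (p_le1 : p <= 1) (c_gt0 : 0 < c) (np : n%:R * p = c).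

Lemma binomial_tail_mean_le r :
  (r <= n)%N -> r%:R * p <= c / (1 - expR (- c)) * (1 - (1 - p) ^+ r).
Proof.
move=> r_le_n; have D := one_sub_expRN_gt0 c_gt0.
have s_bounds : 0 <= 1 - p <= 1 by rewrite subr_ge0 p_le1 lerBlDr lerDl.
have pow_le : (1 - p) ^+ n <= expR (- c).
  rewrite -np -mulrN expRM_natl; apply: lerXn2r; rewrite ?nnegrE ?expR_ge0 //.
    by case/andP: s_bounds.
  by have := expR_ge1Dx (- p); lra.
have G := one_subX_mul_le s_bounds r_le_n.
rewrite mulrAC ler_pdivlMr //.
apply: (le_trans (y := r%:R * p * (1 - (1 - p) ^+ n))).
  by rewrite ler_wpM2l ?mulr_ge0 //; lra.
rewrite -np -mulrA mulrCA [n%:R * p]mulrC -mulrA.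
exact (ler_wpM2l p_ge0 G).
Qed.

Lemma flipped_ones_mean_le (x : bits n) (g : bits n -> R) :
  (forall m, 0 <= g m) ->
  (forall (m : bits n) i, x i -> ~~ m i -> g (toggle m i) <= g m) ->
  \sum_(m | (0 < flipped_ones x m)%N) mask_prob p m * g m * (flipped_ones x m)%:R
  <= c / (1 - expR (- c)) * \sum_(m | (0 < flipped_ones x m)%N) mask_prob p m * g m.
Proof.
move=> g_ge0 g_mono.
set X := \sum_(m | _) _ * _ * _; set Y := \sum_(m | _) _.
have Y_ge0 : 0 <= Y by apply: sumr_ge0 => m _; rewrite mulr_ge0 ?mask_prob_ge0.
have [p_lt1 | p_ge1] := ltrP p 1; last first.
  have p1 : p = 1 by apply/eqP; rewrite eq_le p_le1 p_ge1.
  have nc : n%:R = c by rewrite -np p1 mulr1.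
  apply: (le_trans (y := c * Y)); last by rewrite ler_wpM2r ?le_div_one_sub_expRN.
  rewrite /X /Y mulr_sumr ler_sum // => m _.
  by rewrite mulrC ler_wpM2r ?mulr_ge0 ?mask_prob_ge0 // -nc ler_nat flipped_ones_le.
have [r0 | r_gt0] := posnP (ones x).
  have B_ge0 := le_trans (ltW c_gt0) (le_div_one_sub_expRN c_gt0).
  rewrite /X big1 => [|m]; first exact: mulr_ge0.
  by have := flipped_ones_le_ones x m; rewrite r0 leqn0 => /eqP ->.
have p_gt0 : 0 < p.
  rewrite lt_def p_ge0 andbT; apply/eqP => p0.
  by move: c_gt0; rewrite -np p0 mulr0 ltxx.
have D_gt0 : 0 < 1 - (1 - p) ^+ ones x.
  by rewrite subr_gt0 exprn_ilt1 ?subr_ge0 ?ltW // ?gtrBl // -lt0n.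
rewrite -(ler_pM2r D_gt0) (le_trans (flipped_ones_weighted_mean_le p_ge0 p_lt1 g_mono)) //.
by rewrite -/Y [X in _ <= X]mulrAC ler_wpM2r // binomial_tail_mean_le // ones_le.
Qed.

End DriftBound.

Section FfunUpdate.
Variables (I : finType) (T : Type).
Implicit Types (f : {ffun I -> T}) (i j : I) (v : T).

Definition ffun_upd f i v : {ffun I -> T} := [ffun j => if j == i then v else f j].

Lemma ffun_upd_at f i v : ffun_upd f i v i = v.
Proof. by rewrite ffunE eqxx. Qed.

Lemma ffun_upd_ne f i v j : j != i -> ffun_upd f i v j = f j.
Proof. by rewrite ffunE => /negbTE ->. Qed.

Lemma ffun_updK f i v : ffun_upd (ffun_upd f i v) i (f i) = f.
Proof. by apply/ffunP => j; rewrite !ffunE; case: eqP => // ->. Qed.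

End FfunUpdate.

Section Selection.
Variables (R : realType) (n k : nat) (f : bits n -> R) (x : bits n).
Implicit Types (ms : {ffun 'I_k -> bits n}) (j : 'I_k) (m : bits n).

Lemma sel_prob_ge0 ms j : 0 <= sel_prob f x ms j.
Proof. by rewrite /sel_prob; case: ifP => // _; rewrite invr_ge0 ler0n. Qed.

Lemma sel_prob_le1 ms j : sel_prob f x ms j <= 1.
Proof.
rewrite /sel_prob; case: ifP => // best_j.
have : (0 < #|[set j' | is_best f x ms j']|)%N.
  by rewrite card_gt0; apply/set0Pn; exists j; rewrite inE.
by move=> ?; rewrite invf_le1 ?ler1n // ltr0n.
Qed.

Lemma sum_sel_prob_le1 ms : \sum_j sel_prob f x ms j <= 1.
Proof.
rewrite /sel_prob -big_mkcond /= sumr_const.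
have -> : #|[pred j | is_best f x ms j]| = #|[set j | is_best f x ms j]|.
  by apply: eq_card => j; rewrite inE.
case: (posnP #|[set j | is_best f x ms j]|) => [-> | N_gt0]; first by rewrite mulr0n.
by rewrite -[X in X <= _]mulr_natr mulVf // pnatr_eq0 -lt0n.
Qed.

Lemma eq_sel_prob ms1 ms2 j :
  (forall j', f (mutate x (ms1 j')) = f (mutate x (ms2 j'))) ->
  sel_prob f x ms1 j = sel_prob f x ms2 j.
Proof.
move=> E; have best : is_best f x ms1 =1 is_best f x ms2.
  by move=> j0; apply: eq_forallb => j'; rewrite !E.
rewrite /sel_prob best; congr (if _ then _^-1 else _).
by congr _%:R; apply: eq_card => j0; rewrite !inE best.
Qed.

Lemma is_best_upd_lt ms j m m' :
  f (mutate x m') < f (mutate x m) -> is_best f x (ffun_upd ms j m') j ->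
  is_best f x (ffun_upd ms j m) =1 pred1 j.
Proof.
move=> lt_m'm /forallP best_m' j0; rewrite /=.
have best_m'_ne j' : j' != j -> f (mutate x (ms j')) <= f (mutate x m').
  by move=> ne; have := best_m' j'; rewrite ffun_upd_ne // ffun_upd_at.
case: (eqVneq j0 j) => [->|ne].
  apply/forallP => j'; case: (eqVneq j' j) => [->|ne']; first exact: lexx.
  by rewrite ffun_upd_ne // ffun_upd_at (le_trans (best_m'_ne _ ne')) ?ltW.
apply/negbTE/negP => /forallP/(_ j); rewrite ffun_upd_at ffun_upd_ne //.
by move=> le_m; have := le_lt_trans (le_trans le_m (best_m'_ne _ ne)) lt_m'm; rewrite ltxx.
Qed.

Lemma sel_prob_upd_le ms j m m' :
  f (mutate x m') <= f (mutate x m) ->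
  sel_prob f x (ffun_upd ms j m') j <= sel_prob f x (ffun_upd ms j m) j.
Proof.
move=> le_m'm; have [lt_m'm | ge_m'm] := ltrP (f (mutate x m')) (f (mutate x m)); last first.
  have eq_f : f (mutate x m') = f (mutate x m) by apply/eqP; rewrite eq_le le_m'm ge_m'm.
  by rewrite (@eq_sel_prob _ (ffun_upd ms j m)) // => j'; rewrite !ffunE; case: eqP.
case best_m' : (is_best f x (ffun_upd ms j m') j); last first.
  by rewrite /sel_prob best_m' sel_prob_ge0.
have best := is_best_upd_lt lt_m'm best_m'.
rewrite (le_trans (sel_prob_le1 _ _)) // /sel_prob best /= eqxx.
have -> : [set j' | is_best f x (ffun_upd ms j m) j'] = [set j].
  by apply/setP => j0; rewrite !inE best.
by rewrite cards1 invr1.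
Qed.

End Selection.

Section Resampling.
Variables (R : realType) (n k : nat) (p : R).
Implicit Types (ms : {ffun 'I_k -> bits n}) (j : 'I_k) (m : bits n).

Lemma family_prob_upd ms j m :
  family_prob p (ffun_upd ms j m) * mask_prob p (ms j) = family_prob p ms * mask_prob p m.
Proof.
rewrite /family_prob (bigD1 j) //= [in RHS](bigD1 j) //= ffun_upd_at.
under eq_bigr => j' ne do rewrite ffun_upd_ne //.
by ring.
Qed.

(* Drawing offspring [j] afresh leaves the law of the family unchanged:
   (ms, m) |-> (ffun_upd ms j m, ms j) is an involution preserving weights. *)
Lemma sum_family_prob_resample (G : {ffun 'I_k -> bits n} -> R) j :
  \sum_(ms : {ffun 'I_k -> bits n}) family_prob p ms * G ms =
  \sum_(ms : {ffun 'I_k -> bits n})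
    family_prob p ms * \sum_(m : bits n) mask_prob p m * G (ffun_upd ms j m).
Proof.
pose swap (q : {ffun 'I_k -> bits n} * bits n) := (ffun_upd q.1 j q.2, q.1 j).
have swapK : involutive swap by case=> ms m; rewrite /swap /= ffun_updK ffun_upd_at.
transitivity (\sum_(ms : {ffun 'I_k -> bits n}) \sum_(m : bits n)
  family_prob p ms * mask_prob p m * G ms).
  apply: eq_bigr => ms _; rewrite -mulr_suml -mulr_sumr.
  by rewrite sum_mask_prob mulr1.
rewrite pair_bigA (reindex_inj (inv_inj swapK)) /=.
transitivity (\sum_(q : {ffun 'I_k -> bits n} * bits n)
   family_prob p q.1 * mask_prob p q.2 * G (ffun_upd q.1 j q.2)).
  by apply: eq_bigr => -[ms m] _ /=; rewrite family_prob_upd.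
rewrite -(pair_bigA _ (fun ms m =>
  family_prob p ms * mask_prob p m * G (ffun_upd ms j m))) /=.
by apply: eq_bigr => ms _; rewrite mulr_sumr; apply: eq_bigr => m _; rewrite mulrA.
Qed.

End Resampling.

Section SelectedOffspring.
Variables (R : realType) (n k : nat) (c : R) (f : bits n -> R) (x : bits n).
Hypotheses (c_gt0 : 0 < c) (c_le_n : c <= n%:R) (f_mono : monotone_fun f).
Implicit Types (ms : {ffun 'I_k -> bits n}) (j : 'I_k) (m : bits n).
Local Notation p := (c / n%:R).
Local Notation B := (c / (1 - expR (- c))).

Let n_gt0 : 0 < n%:R :> R. Proof. exact: lt_le_trans c_le_n. Qed.
Let p_ge0 : 0 <= p. Proof. by rewrite divr_ge0 // ltW. Qed.
Let p_le1 : p <= 1. Proof. by rewrite ler_pdivrMr // mul1r. Qed.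
Let np : n%:R * p = c. Proof. by rewrite mulrC divfK // gt_eqF. Qed.
Let B_ge0 : 0 <= B. Proof. exact: le_trans (ltW c_gt0) (le_div_one_sub_expRN c_gt0). Qed.
Let family_prob_ge0 ms : 0 <= family_prob p ms.
Proof. by apply: prodr_ge0 => j _; apply: mask_prob_ge0. Qed.

Definition others_flip_a_one ms j := [forall j', (j' != j) ==> flips_a_one x (ms j')].

Lemma Abar_upd ms j m :
  Abar x (ffun_upd ms j m) = flips_a_one x m && others_flip_a_one ms j.
Proof.
apply/forallP/andP => [Hall | [Hm /forallP Hothers] j'].
  split; first by have := Hall j; rewrite ffun_upd_at.
  by apply/forallP => j'; apply/implyP => ne; have := Hall j'; rewrite ffun_upd_ne.
case: (eqVneq j' j) => [->|ne]; first by rewrite ffun_upd_at.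
by rewrite ffun_upd_ne //; move/implyP: (Hothers j'); apply.
Qed.

Lemma sum_Abar_resample (H : {ffun 'I_k -> bits n} -> R) j :
  \sum_(ms | Abar x ms) family_prob p ms * H ms =
  \sum_ms family_prob p ms * (others_flip_a_one ms j)%:R *
    \sum_(m | (0 < flipped_ones x m)%N) mask_prob p m * H (ffun_upd ms j m).
Proof.
rewrite big_mkcond (eq_bigr (fun ms => family_prob p ms * (if Abar x ms then H ms else 0))).
  rewrite (sum_family_prob_resample _ _ j); apply: eq_bigr => ms _; rewrite -mulrA.
  congr (_ * _); rewrite [in RHS]big_mkcond mulr_sumr; apply: eq_bigr => m _.
  rewrite Abar_upd flips_a_oneE.
  by case: (0 < _)%N; case: others_flip_a_one; rewrite /= ?mulr0 ?mul1r ?mul0r.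
by move=> ms _; case: ifP; rewrite ?mulr0.
Qed.

Lemma selected_flipped_ones_le j :
  \sum_(ms | Abar x ms) family_prob p ms * (sel_prob f x ms j * (flipped_ones x (ms j))%:R)
  <= B * \sum_(ms | Abar x ms) family_prob p ms * sel_prob f x ms j.
Proof.
rewrite !(sum_Abar_resample _ j) mulr_sumr; apply: ler_sum => ms _.
rewrite mulrCA ler_wpM2l ?mulr_ge0 ?ler0n //.
under eq_bigr => m _ do rewrite ffun_upd_at mulrA.
apply: flipped_ones_mean_le => // [m | m i xi mi]; first exact: sel_prob_ge0.
by apply/sel_prob_upd_le/ltW/monotone_mutate_toggle.
Qed.

Lemma cond_exp_Abar_ge (h : bits n -> R) :
  (forall m, - (flipped_ones x m)%:R <= h (mutate x m)) ->
  0 < prob_Abar k p x ->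
  - B <= cond_exp_Abar k p f x h.
Proof.
move=> h_ge P_gt0; rewrite /cond_exp_Abar ler_pdivlMr //.
set N := \sum_(ms | _) _.
have N_ge : - \sum_(j < k) \sum_(ms | Abar x ms)
       family_prob p ms * (sel_prob f x ms j * (flipped_ones x (ms j))%:R) <= N.
  rewrite exchange_big -sumrN; apply: ler_sum => ms _.
  rewrite mulr_sumr -sumrN; apply: ler_sum => j _.
  by rewrite -mulrN ler_wpM2l // -mulrN ler_wpM2l ?sel_prob_ge0.
have flips_le : \sum_(j < k) \sum_(ms | Abar x ms)
       family_prob p ms * (sel_prob f x ms j * (flipped_ones x (ms j))%:R)
     <= B * \sum_(ms | Abar x ms) family_prob p ms * \sum_(j < k) sel_prob f x ms j.
  apply: le_trans (ler_sum _ (fun j _ => selected_flipped_ones_le j)) _.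
  by rewrite -mulr_sumr exchange_big /=; under [X in _ <= _ * X]eq_bigr do rewrite mulr_sumr.
have mass_le : \sum_(ms | Abar x ms) family_prob p ms * \sum_(j < k) sel_prob f x ms j
     <= prob_Abar k p x.
  by apply: ler_sum => ms _; rewrite -[X in _ <= X]mulr1 ler_wpM2l ?sum_sel_prob_le1.
have := ler_wpM2l B_ge0 mass_le; rewrite mulNr; lra.
Qed.

End SelectedOffspring.

Unset Implicit Arguments.
Theorem mainTheorem9 (R : realType) (n : nat) (c s F lam : R)
  (x : bits n) (f : bits n -> R) :
  0 < c -> c <= n%:R -> 0 < s -> 1 < F -> 1 <= lam ->
  monotone_fun f ->
  (0 < zeros x)%N ->
  0 < prob_Abar (round_nat lam) (c / n%:R) x ->
  - (c / (1 - expR (- c))) <=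
    cond_exp_Abar (round_nat lam) (c / n%:R) f x
      (fun y => (zeros x)%:R - (zeros y)%:R)
  /\
  - (c / (1 - expR (- c))) <=
    cond_exp_Abar (round_nat lam) (c / n%:R) f x
      (fun y => Num.min 1 ((zeros x)%:R - (zeros y)%:R)).
Proof.
move=> c_gt0 c_le_n _ _ _ f_mono _ P_gt0.
have drop_ge m : - (flipped_ones x m)%:R <= (zeros x)%:R - (zeros (mutate x m))%:R :> R.
  by have := zeros_mutate_le x m; rewrite -(ler_nat R) natrD; lra.
split; apply: cond_exp_Abar_ge => // m.
by rewrite le_min drop_ge andbT (le_trans _ ler01) // oppr_le0.
Qed.
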